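(* Let $\Omega_1,\dots,\Omega_n$ be formal 1-forms such that $(\nu_\Gamma(\Omega_1),\dots,\nu_\Gamma(\Omega_n))$ is the $\mathbb C[[x]]$-basis of values of $\Gamma$ (i.e. the minimal generating set of $\Lambda_\Gamma$ as a $\mathbb C[[x]]$-collection; it has exactly one element in each residue class modulo $n$, namely the minimum of $\Lambda_\Gamma$ in that class). Then $$\hat\Omega^1(\mathbb C^2,0)=\mathbb C[[x]]\,\Omega_1\oplus\cdots\oplus\mathbb C[[x]]\,\Omega_n\oplus\mathcal I_\Gamma .$$
   Context: $\Gamma$ is a singular irreducible germ of holomorphic curve at $0\in\mathbb C^2$ with Puiseux parametrization $\Gamma(t)=(t^n,\sum_{\beta\ge\beta_1}a_{\beta,\Gamma}t^\beta)$, $n\ge2$. $\hat\Omega^1(\mathbb C^2,0)$ denotes the formal 1-forms $a\,dx+b\,dy$, $a,b\in\mathbb C[[x,y]]$, a $\mathbb C[[x]]$-module. For such $\omega$ with $\Gamma^*\omega=h(t)dt$, $\nu_\Gamma(\omega)=\mathrm{ord}_th+1$ ($\infty$ if $h\equiv0$). $\Lambda_\Gamma=\{\nu_\Gamma(\omega)\}\setminus\{\infty\}$ over holomorphic 1-forms $\omega$. A $\mathbb C[[x]]$-collection is $S\subset\mathbb Z_{>0}$ with $S+n\mathbb Z_{\ge0}\subset S$. $\mathcal I_\Gamma=\{\omega\in\hat\Omega^1(\mathbb C^2,0):\Gamma^*\omega\equiv0\}$. *)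

From HB Require Import structures.
From mathcomp Require Import all_boot all_order all_algebra.
From mathcomp Require Import reals Rstruct complex.
Set Implicit Arguments. Unset Strict Implicit. Unset Printing Implicit Defensive.
Import Order.TTheory GRing.Theory Num.Theory.
Local Open Scope ring_scope.

Definition C : numClosedFieldType := (Rdefinitions.R)[i].

Definition ser := nat -> C.

Definition ser_mul (f g : ser) : ser :=
  fun k => \sum_(i < k.+1) f i * g (k - i)%N.

Definition ser_one : ser := fun k => (k == 0%N)%:R.

Definition ser_pow (f : ser) (j : nat) : ser := iter j (ser_mul f) ser_one.

Definition ser_mono (m : nat) : ser := fun k => (k == m)%:R.

Definition ser_deriv (f : ser) : ser := fun k => f k.+1 *+ k.+1.

Definition ser2 := nat -> nat -> C.   (* a i j = coefficient of x^i y^j *)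

(* substitution a(t^n, phi(t)), for phi(0) = 0 and n >= 1: the coefficient of
   t^k only involves the finitely many monomials x^i y^j with i, j <= k. *)
Definition ser2_subst (a : ser2) (n : nat) (phi : ser) : ser :=
  fun k => \sum_(i < k.+1) \sum_(j < k.+1)
             a i j * ser_mul (ser_mono (n * i)) (ser_pow phi j) k.

Definition convergent2 (a : ser2) : Prop :=
  exists c r : Rdefinitions.R, 0 < c /\ 0 < r /\
    forall i j, `|a i j| <= (((c * r ^+ (i + j))%:C)%C : C).

Definition convergent1 (f : ser) : Prop :=
  exists c r : Rdefinitions.R, 0 < c /\ 0 < r /\
    forall k, `|f k| <= (((c * r ^+ k)%:C)%C : C).

(* ---------- formal 1-forms  a dx + b dy ---------- *)
Definition form1 := (ser2 * ser2)%type.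

Definition holomorphic_form (w : form1) : Prop :=
  convergent2 w.1 /\ convergent2 w.2.

Definition xsmul (f : ser) (a : ser2) : ser2 :=
  fun i j => \sum_(k < i.+1) f k * a (i - k)%N j.

Definition form_add (w1 w2 : form1) : form1 :=
  (fun i j => w1.1 i j + w2.1 i j, fun i j => w1.2 i j + w2.2 i j).

Definition form_comb (n : nat) (f : 'I_n -> ser) (Om : 'I_n -> form1) : form1 :=
  (fun i j => \sum_(k < n) xsmul (f k) (Om k).1 i j,
   fun i j => \sum_(k < n) xsmul (f k) (Om k).2 i j).

(* Puiseux parametrization of a singular irreducible germ:
   phi(t) = sum_{beta >= beta1} a_beta t^beta, a_beta1 <> 0, n does not divide
   beta1, beta1 > n >= 2, phi convergent, and the parametrization is primitive
   (gcd of n and the support of phi is 1). *)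
Definition puiseux_param (n : nat) (phi : ser) (beta1 : nat) : Prop :=
  [/\ (2 <= n)%N, convergent1 phi,
      (forall b, (b < beta1)%N -> phi b = 0) & phi beta1 != 0] /\
  [/\ ~~ (n %| beta1)%N, (n < beta1)%N &
      (forall d, (1 < d)%N -> (d %| n)%N -> exists b, phi b != 0 /\ ~~ (d %| b)%N)].

(* Gamma^* (a dx + b dy) = h(t) dt with
   h = a(t^n,phi) * n t^(n-1) + b(t^n,phi) * phi'(t) *)
Definition pullback (n : nat) (phi : ser) (w : form1) : ser :=
  fun k => ser_mul (ser2_subst w.1 n phi) (ser_mono n.-1) k *+ n
           + ser_mul (ser2_subst w.2 n phi) (ser_deriv phi) k.

(* nu_Gamma(w) = m  (finite), i.e. ord_t h = m - 1 *)
Definition nu_eq (n : nat) (phi : ser) (w : form1) (m : nat) : Prop :=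
  [/\ (0 < m)%N, pullback n phi w m.-1 != 0 &
      forall k, (k < m.-1)%N -> pullback n phi w k = 0].

Definition Lambda (n : nat) (phi : ser) (m : nat) : Prop :=
  exists w, holomorphic_form w /\ nu_eq n phi w m.

Definition in_IGamma (n : nat) (phi : ser) (w : form1) : Prop :=
  forall k, pullback n phi w k = 0.

Definition generates (n : nat) (S L : nat -> Prop) : Prop :=
  forall m, L m <-> exists b q, S b /\ m = (b + n * q)%N.

Definition cx_basis (n : nat) (S L : nat -> Prop) : Prop :=
  generates n S L /\
  forall S' : nat -> Prop, (forall m, S' m -> S m) -> generates n S' L ->
    forall m, S m -> S' m.

From HB Require Import structures.
From mathcomp Require Import all_boot all_order all_algebra.
From mathcomp Require Import reals Rstruct complex.
From mathcomp Require Import zify.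
From Stdlib Require Import FunctionalExtensionality.
Import Order.TTheory GRing.Theory Num.Theory.
Local Open Scope ring_scope.

(* Multiplying a form by x^q multiplies its pullback by t^(nq), so the forms
   x^q Om_k have pairwise distinct orders lam_k + nq (the lam_k are
   incongruent mod n), and these orders exhaust Lambda.  Existence: kill the
   pullback of w order by order; whenever the residual w - sum f_k Om_k has a
   first nonzero coefficient at t^N, a polynomial truncation of the residual
   is a holomorphic form of value N+1, so N+1 = lam_k + nq and a multiple of
   x^q Om_k removes that coefficient.  Each coefficient of f is modified only
   finitely often, so the process converges.  Uniqueness: in a nonzero
   combination sum f_k Om_k the term of least order lam_k + nq is alone, hence
   the pullback does not vanish. *)

Lemma big_nat_trunc (F : nat -> C) K B : (K <= B)%N ->
  (forall i, (K <= i < B)%N -> F i = 0) ->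
  \sum_(0 <= i < B) F i = \sum_(0 <= i < K) F i.
Proof.
move=> hKB h0; rewrite (big_cat_nat (leq0n K) hKB) /=.
rewrite [X in _ + X]big_nat_cond [X in _ + X]big1 ?addr0 // => i /andP[hi _]; exact: h0.
Qed.

Lemma ser_mul1l (g : ser) k : ser_mul ser_one g k = g k.
Proof.
rewrite /ser_mul big_ord_recl /ser_one /= mul1r subn0 big1 ?addr0 //.
by move=> i _; rewrite mul0r.
Qed.

Lemma ser_mul_ext (s s' g : ser) k : (forall i, (i <= k)%N -> s i = s' i) ->
  ser_mul s g k = ser_mul s' g k.
Proof. by move=> h; apply: eq_bigr => i _; rewrite h // -ltnS. Qed.

Lemma ser_mul_shift (s s' g : ser) m k :
  (forall i, s i = if (m <= i)%N then s' (i - m)%N else 0) ->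
  ser_mul s g k = if (m <= k)%N then ser_mul s' g (k - m)%N else 0.
Proof.
move=> hs; rewrite /ser_mul -(big_mkord xpredT (fun i => s i * g (k - i)%N)).
case: ifP => hm; last first.
  by rewrite big_nat_cond big1 // => i /andP[/andP[_ hi] _]; rewrite hs ifF ?mul0r //; lia.
rewrite (@big_cat_nat _ _ _ m 0 k.+1) //=; last by lia.
rewrite big_nat_cond big1 ?add0r; last first.
  by move=> i /andP[/andP[_ hi] _]; rewrite hs ifF ?mul0r //; lia.
rewrite -{1}(add0n m) big_addn subSn // -(big_mkord xpredT (fun i => s' i * g (k - m - i)%N)).
apply: eq_bigr => i _; rewrite hs ifT ?addnK; last by lia.
by rewrite subnDA subnAC.
Qed.

Lemma ser_mul_monoE m (g : ser) k :
  ser_mul (ser_mono m) g k = if (m <= k)%N then g (k - m)%N else 0.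
Proof.
rewrite (@ser_mul_shift _ ser_one _ m) ?ser_mul1l // => i; rewrite /ser_mono /ser_one.
by case: leqP => h; [rewrite subn_eq0 eqn_leq h andbT | rewrite ltn_eqF].
Qed.

Lemma xsmul_monoE q (a : ser2) i j :
  xsmul (ser_mono q) a i j = if (q <= i)%N then a (i - q)%N j else 0.
Proof. exact: (ser_mul_monoE q (fun l => a l j) i). Qed.

Lemma ser_pow_small (phi : ser) : phi 0%N = 0 ->
  forall j m, (m < j)%N -> ser_pow phi j m = 0.
Proof.
move=> phi0; elim=> [//|j IH] m hm.
rewrite /ser_pow /= -/(ser_pow phi j) /ser_mul big1 // => i _.
case: (nat_of_ord i) (ltn_ord i) => [|i'] hi; first by rewrite phi0 mul0r.
by rewrite IH ?mulr0 //; lia.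
Qed.

Lemma ser_mul_lin (I : Type) (r : seq I) (c : I -> C) (S : I -> ser) g k :
  ser_mul (fun i => \sum_(l <- r) c l * S l i) g k =
  \sum_(l <- r) c l * ser_mul (S l) g k.
Proof.
rewrite /ser_mul.
transitivity (\sum_(i < k.+1) \sum_(l <- r) c l * (S l i * g (k - i)%N)).
  by apply: eq_bigr => i _; rewrite mulr_suml; apply: eq_bigr => l _; rewrite mulrA.
by rewrite exchange_big; apply: eq_bigr => l _; rewrite mulr_sumr.
Qed.

Definition trunc2 (N : nat) (a : ser2) : ser2 :=
  fun i j => if (i <= N)%N && (j <= N)%N then a i j else 0.

Lemma convergent2_trunc N a : convergent2 (trunc2 N a).
Proof.
pose nr (z : C) := Num.sqrt (complex.Re z ^+ 2 + complex.Im z ^+ 2).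
have nr_ge0 z : 0 <= nr z by exact: sqrtr_ge0.
pose c := 1 + \sum_(i < N.+1) \sum_(j < N.+1) nr (a i j).
have sum_ge0 (i : 'I_N.+1) : 0 <= \sum_(j < N.+1) nr (a i j) by exact: sumr_ge0.
have nr_le_c (i j : 'I_N.+1) : nr (a i j) <= c.
  rewrite /c (bigD1 i) //= (bigD1 j) //= addrCA -addrA lerDl.
  by rewrite !addr_ge0 ?ler01 ?sumr_ge0.
have c_gt0 : 0 < c by rewrite /c ltr_pwDl // sumr_ge0.
exists c, 1; split=> //.
split=> // i j; rewrite expr1n mulr1 /trunc2.
case: ifP => [/andP[hi hj] | _]; last by rewrite normr0 ler0c ltW.
by rewrite normc_def lecR (nr_le_c (Ordinal (hi : i < N.+1)%N) (Ordinal (hj : j < N.+1)%N)).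
Qed.

Definition xpow_form (q : nat) (w : form1) : form1 :=
  (xsmul (ser_mono q) w.1, xsmul (ser_mono q) w.2).

Definition form_sub (w1 w2 : form1) : form1 :=
  (fun i j => w1.1 i j - w2.1 i j, fun i j => w1.2 i j - w2.2 i j).

Lemma form_add_subK (w1 w2 : form1) : form_add w2 (form_sub w1 w2) = w1.
Proof.
by case: w1 => a1 b1; congr pair; apply: functional_extensionality => i;
  apply: functional_extensionality => j; rewrite /= addrC subrK.
Qed.

Lemma form_addI (w : form1) : injective (form_add w).
Proof.
move=> [a b] [a' b'] [ea eb]; congr pair; apply: functional_extensionality => i;
  apply: functional_extensionality => j; apply: addrI.
  exact: (congr1 (fun h => h i j) ea).
exact: (congr1 (fun h => h i j) eb).
Qed.

Section Pullback.

Context {n : nat} {phi : ser}.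

Lemma ser2_subst_local (a a' : ser2) K :
  (forall i j, (i <= K)%N -> (j <= K)%N -> a i j = a' i j) ->
  ser2_subst a n phi K = ser2_subst a' n phi K.
Proof. by move=> h; apply: eq_bigr => i _; apply: eq_bigr => j _; rewrite h // -ltnS. Qed.

Lemma pullback_local (w w' : form1) N :
  (forall i j, (i <= N)%N -> (j <= N)%N -> w.1 i j = w'.1 i j /\ w.2 i j = w'.2 i j) ->
  pullback n phi w N = pullback n phi w' N.
Proof.
move=> h; rewrite /pullback; congr (_ *+ _ + _); apply: ser_mul_ext => K hK;
  apply: ser2_subst_local => i j hi hj;
  by have [] := h i j (leq_trans hi hK) (leq_trans hj hK).
Qed.

Lemma ser2_subst_lin (I : Type) (r : seq I) (c : I -> C) (A : I -> ser2) K :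
  ser2_subst (fun i j => \sum_(k <- r) c k * A k i j) n phi K =
  \sum_(k <- r) c k * ser2_subst (A k) n phi K.
Proof.
rewrite /ser2_subst.
transitivity (\sum_(i < K.+1) \sum_(j < K.+1) \sum_(k <- r)
   c k * (A k i j * ser_mul (ser_mono (n * i)) (ser_pow phi j) K)).
  apply: eq_bigr => i _; apply: eq_bigr => j _; rewrite mulr_suml.
  by apply: eq_bigr => k _; rewrite mulrA.
under eq_bigr do rewrite exchange_big.
rewrite exchange_big; apply: eq_bigr => k _; rewrite mulr_sumr.
by apply: eq_bigr => i _; rewrite mulr_sumr.
Qed.

Lemma pullback_lin (I : Type) (r : seq I) (c : I -> C) (W : I -> form1) N :
  pullback n phi (fun i j => \sum_(k <- r) c k * (W k).1 i j,
                  fun i j => \sum_(k <- r) c k * (W k).2 i j) N =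
  \sum_(k <- r) c k * pullback n phi (W k) N.
Proof.
rewrite /pullback /=.
rewrite (@ser_mul_ext _ (fun K => \sum_(k <- r) c k * ser2_subst (W k).1 n phi K));
  last by move=> i _; rewrite ser2_subst_lin.
rewrite (@ser_mul_ext (ser2_subst _ n phi)
  (fun K => \sum_(k <- r) c k * ser2_subst (W k).2 n phi K));
  last by move=> i _; rewrite ser2_subst_lin.
rewrite !ser_mul_lin -sumrMnl -big_split /=; apply: eq_bigr => k _.
by rewrite mulrDr mulrnAr.
Qed.

Lemma pullback_add w1 w2 N :
  pullback n phi (form_add w1 w2) N = pullback n phi w1 N + pullback n phi w2 N.
Proof.
pose W (b : bool) := if b then w1 else w2.
transitivity (\sum_(b <- [:: true; false]) 1 * pullback n phi (W b) N); last first.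
  by rewrite !big_cons big_nil !mul1r addr0.
rewrite -pullback_lin; apply: pullback_local => i j _ _.
by split; rewrite /= !big_cons big_nil !mul1r !addr0.
Qed.

Lemma pullback_sub w1 w2 N :
  pullback n phi (form_sub w1 w2) N = pullback n phi w1 N - pullback n phi w2 N.
Proof.
pose W (b : bool) := if b then w1 else w2.
transitivity (\sum_(b <- [:: true; false]) (if b then 1 else -1) * pullback n phi (W b) N);
  last by rewrite !big_cons big_nil /= mul1r mulN1r addr0.
rewrite -pullback_lin; apply: pullback_local => i j _ _.
by split; rewrite /= !big_cons big_nil /= !mul1r !mulN1r !addr0.
Qed.

Lemma pullback_comb (Om : 'I_n -> form1) (F : 'I_n -> ser) N :
  pullback n phi (form_comb F Om) N =
  \sum_(k < n) \sum_(l < N.+1) F k l * pullback n phi (xpow_form l (Om k)) N.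
Proof.
have xsmul_trunc (a : ser2) k i j : (i <= N)%N ->
    xsmul (F k) a i j = \sum_(l < N.+1) F k l * xsmul (ser_mono l) a i j.
  move=> hi; under [RHS]eq_bigr do rewrite xsmul_monoE.
  rewrite /xsmul (big_ord_widen N.+1 (fun l => F k l * a (i - l)%N j)) ?ltnS // big_mkcond.
  by apply: eq_bigr => l _; rewrite ltnS; case: ifP; rewrite ?mulr0.
rewrite pair_bigA /=.
rewrite -(@pullback_lin _ (index_enum ('I_n * 'I_N.+1)%type)
  (fun p => F p.1 p.2) (fun p => xpow_form p.2 (Om p.1))).
apply: pullback_local => i j hi _; rewrite /=.
rewrite -(pair_bigA _ (fun k (l : 'I_N.+1) => F k l * xsmul (ser_mono l) (Om k).1 i j)).
rewrite -(pair_bigA _ (fun k (l : 'I_N.+1) => F k l * xsmul (ser_mono l) (Om k).2 i j)).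
by split; apply: eq_bigr => k _; apply: xsmul_trunc.
Qed.

Lemma pullback_comb_local (Om : 'I_n -> form1) (F G : 'I_n -> ser) N :
  (forall k l, (l <= N)%N -> F k l = G k l) ->
  pullback n phi (form_comb F Om) N = pullback n phi (form_comb G Om) N.
Proof.
move=> h; rewrite !pullback_comb; apply: eq_bigr => k _; apply: eq_bigr => l _.
by rewrite h // -ltnS.
Qed.

Lemma pullback_combB (Om : 'I_n -> form1) (F G : 'I_n -> ser) N :
  pullback n phi (form_comb F Om) N - pullback n phi (form_comb G Om) N =
  pullback n phi (form_comb (fun k l => F k l - G k l) Om) N.
Proof.
rewrite !pullback_comb -sumrB; apply: eq_bigr => k _; rewrite -sumrB.
by apply: eq_bigr => l _; rewrite mulrBl.
Qed.

Lemma Lambda_first_nonzero w N : pullback n phi w N != 0 ->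
  (forall m, (m < N)%N -> pullback n phi w m = 0) -> Lambda n phi N.+1.
Proof.
move=> hN hlow.
pose wt : form1 := (trunc2 N w.1, trunc2 N w.2).
have wtE m : (m <= N)%N -> pullback n phi wt m = pullback n phi w m.
  move=> hm; apply: pullback_local => i j hi hj.
  have hij : ((i <= N) && (j <= N))%N by apply/andP; split; lia.
  by rewrite /wt /trunc2 /= hij.
exists wt; split; first by split; exact: convergent2_trunc.
by split=> //=; [rewrite wtE | move=> k hk; rewrite wtE ?hlow //; lia].
Qed.

Hypotheses (phi0 : phi 0%N = 0) (n_gt0 : (0 < n)%N).

Lemma ser_mul_mono_pow_small i j k : ((k < i) || (k < j))%N ->
  ser_mul (ser_mono (n * i)) (ser_pow phi j) k = 0.
Proof.
move=> h; rewrite ser_mul_monoE; case: ifP => // hi.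
rewrite ser_pow_small //; have := leq_pmull i n_gt0; lia.
Qed.

Lemma ser2_subst_trunc a K B1 B2 : (K < B1)%N -> (K < B2)%N ->
  ser2_subst a n phi K = \sum_(0 <= i < B1) \sum_(0 <= j < B2)
      a i j * ser_mul (ser_mono (n * i)) (ser_pow phi j) K.
Proof.
move=> h1 h2; rewrite /ser2_subst (@big_nat_trunc _ K.+1) //; last first.
  move=> i /andP[hi _]; rewrite big1 // => j _.
  by rewrite ser_mul_mono_pow_small ?mulr0 //; lia.
rewrite big_mkord; apply: eq_bigr => i _.
rewrite (@big_nat_trunc _ K.+1) ?big_mkord // => j /andP[hj _].
by rewrite ser_mul_mono_pow_small ?mulr0 //; lia.
Qed.

Lemma ser2_subst_xpow q a K :
  ser2_subst (xsmul (ser_mono q) a) n phi K =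
  if (n * q <= K)%N then ser2_subst a n phi (K - n * q)%N else 0.
Proof.
rewrite (@ser2_subst_trunc _ _ (K.+1 + q) K.+1) //; last by lia.
case: ifP => hq; last first.
  rewrite big_nat_cond big1 // => i _; apply: big1 => j _.
  rewrite xsmul_monoE; case: ifP => hi; last by rewrite mul0r.
  have hni : (n * q <= n * i)%N by rewrite leq_mul2l hi orbT.
  by rewrite ser_mul_monoE ifF ?mulr0 //; lia.
rewrite (@ser2_subst_trunc _ _ K.+1 K.+1) //; try lia.
rewrite (@big_cat_nat _ _ _ q 0 (K.+1 + q)) //=; last by lia.
rewrite big_nat_cond big1 ?add0r; last first.
  move=> i /andP[/andP[_ hi] _]; apply: big1 => j _.
  by rewrite xsmul_monoE ifF ?mul0r //; lia.
rewrite -{1}(add0n q) big_addn addnK.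
apply: eq_bigr => i _; apply: eq_bigr => j _.
rewrite xsmul_monoE ifT ?addnK; last by lia.
rewrite !ser_mul_monoE; case: ifP => h; case: ifP => h' //; try lia.
by rewrite mulnDr subnDA subnAC.
Qed.

Lemma pullback_xpow q w N :
  pullback n phi (xpow_form q w) N =
  if (n * q <= N)%N then pullback n phi w (N - n * q)%N else 0.
Proof.
rewrite /pullback /xpow_form /=.
rewrite (@ser_mul_shift _ (ser2_subst w.1 n phi) _ (n * q));
  last by move=> i; rewrite ser2_subst_xpow.
rewrite (@ser_mul_shift (ser2_subst (xsmul _ w.2) n phi) (ser2_subst w.2 n phi) _ (n * q));
  last by move=> i; rewrite ser2_subst_xpow.
by case: ifP => //; rewrite mul0rn addr0.
Qed.

Lemma pullback_xpow_low q w m N : nu_eq n phi w m -> (N.+1 < m + n * q)%N ->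
  pullback n phi (xpow_form q w) N = 0.
Proof.
move=> [_ _ hlow] hN; rewrite pullback_xpow; case: ifP => // hq.
by rewrite hlow //; lia.
Qed.

Lemma pullback_xpow_lead q w m : nu_eq n phi w m ->
  pullback n phi (xpow_form q w) (m + n * q).-1 = pullback n phi w m.-1.
Proof.
move=> [m_gt0 _ _]; rewrite pullback_xpow ifT; last by lia.
by congr pullback; lia.
Qed.

End Pullback.

Lemma cx_basis_mod_eq {I : Type} {n} {lam : I -> nat} {L : nat -> Prop} :
  cx_basis n (fun m => exists k, lam k = m) L ->
  forall k k', lam k = lam k' %[mod n] -> lam k = lam k'.
Proof.
move=> [gen minimal].
(* the larger of two congruent values is redundant in a generating set *)
suff redundant k k' : (lam k < lam k')%N -> lam k = lam k' %[mod n] -> False.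
  move=> k k' hmod; case: (ltngtP (lam k) (lam k')) => // hlt; exfalso.
    exact: redundant hlt hmod.
  exact: redundant hlt (esym hmod).
move=> hlt hmod.
pose S' m := (exists k0, lam k0 = m) /\ m <> lam k'.
suff [_] : S' (lam k') by [].
apply: (minimal S') => [m [] // | m | ]; last by exists k'.
rewrite gen; split => [[b [q [[k0 <-] ->]]] | [b [q [[hb _] hm]]]]; last by exists b, q.
case: (eqVneq (lam k0) (lam k')) => [e | hne].
  have /dvdnP [d hd] : (n %| lam k' - lam k)%N by rewrite -eqn_mod_dvd ?hmod //; lia.
  by exists (lam k), (d + q); split; [split; [exists k | lia] | rewrite e; lia].
by exists (lam k0), q; split => //; split; [exists k0 | exact/eqP].
Qed.

Section Existence.

Context {n : nat} {phi : ser} {Om : 'I_n -> form1} {lam : 'I_n -> nat} (w : form1).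
Hypotheses (phi0 : phi 0%N = 0) (n_gt0 : (0 < n)%N).
Hypothesis Om_value : forall k, nu_eq n phi (Om k) (lam k).
Hypothesis Lambda_gen : forall m, Lambda n phi m -> exists k q, (lam k + n * q)%N = m.

Definition residual (F : 'I_n -> ser) N :=
  pullback n phi w N - pullback n phi (form_comb F Om) N.

Definition coef_add (F : 'I_n -> ser) (k : 'I_n) (q : nat) (c : C) : 'I_n -> ser :=
  fun k' l => F k' l + (if (k' == k) && (l == q) then c else 0).

Lemma pullback_comb_coef_add F k q c m :
  pullback n phi (form_comb (coef_add F k q c) Om) m =
  pullback n phi (form_comb F Om) m +
  (if (q <= m)%N then c * pullback n phi (xpow_form q (Om k)) m else 0).
Proof.
rewrite !pullback_comb.
under eq_bigr do under eq_bigr do rewrite /coef_add mulrDl.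
under eq_bigr do rewrite big_split /=.
rewrite big_split /=; congr (_ + _).
rewrite (bigD1 k) //= [X in _ + X]big1 ?addr0 => [|k' hk']; last first.
  by apply: big1 => l _; rewrite (negbTE hk') mul0r.
case: leqP => hq; last first.
  apply: big1 => l _; rewrite eqxx ifF ?mul0r //.
  by apply/negbTE; rewrite neq_ltn (leq_trans (ltn_ord l)).
rewrite (bigD1 (Ordinal (hq : q < m.+1)%N)) //= !eqxx [X in _ + X]big1 ?addr0 // => l hl.
by rewrite ifF ?mul0r //; apply: contraNF hl => /eqP e; apply/eqP/val_inj.
Qed.

Lemma residual_coef_add F k q c m :
  residual (coef_add F k q c) m =
  residual F m - (if (q <= m)%N then c * pullback n phi (xpow_form q (Om k)) m else 0).
Proof. by rewrite /residual pullback_comb_coef_add opprD addrA. Qed.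

(* Correct the coefficient of x^q Om_k, where lam_k + nq = N+1, so that the
   residual's coefficient of t^N vanishes. *)
Definition approx_step N (F : 'I_n -> ser) : 'I_n -> ser :=
  if [pick k | (lam k <= N.+1)%N && (n %| N.+1 - lam k)%N] is Some k
  then coef_add F k ((N.+1 - lam k) %/ n)
         (residual F N / pullback n phi (Om k) (lam k).-1)
  else F.

Fixpoint approx_coefs N : 'I_n -> ser :=
  if N is N'.+1 then approx_step N' (approx_coefs N') else fun _ _ => 0.

Lemma residual_approx_step F N :
  (forall m, (m < N)%N -> residual F m = 0) ->
  forall m, (m <= N)%N -> residual (approx_step N F) m = 0.
Proof.
move=> hF m hm; rewrite /approx_step; case: pickP => [k /andP[hk hdvd] | none].
  have [lam_gt0 lead_neq0 _] := Om_value k.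
  have hnq : (n * ((N.+1 - lam k) %/ n) = N.+1 - lam k)%N by rewrite mulnC divnK.
  move: ((N.+1 - lam k) %/ n)%N hnq => q hnq.
  rewrite residual_coef_add; move: hm; rewrite leq_eqVlt => /orP[/eqP -> | hmN]; last first.
    rewrite hF // (pullback_xpow_low phi0 n_gt0 _ _ _ _ (Om_value k)) ?mulr0 ?if_same ?subr0 //.
    lia.
  rewrite ifT; last by have := leq_pmull q n_gt0; lia.
  have -> : N = (lam k + n * q).-1 by lia.
  by rewrite (pullback_xpow_lead phi0 n_gt0 _ _ _ (Om_value k)) divfK // subrr.
move: hm; rewrite leq_eqVlt => /orP[/eqP -> | hmN]; last exact: hF.
apply/eqP; apply: contraT => hN.
have /Lambda_gen [k [q hkq]] : Lambda n phi N.+1.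
  apply: (@Lambda_first_nonzero _ _ (form_sub w (form_comb F Om))) => [|j hj];
    rewrite pullback_sub; [exact: hN | exact: hF].
have := none k; rewrite -hkq addKn dvdn_mulr ?andbT //; lia.
Qed.

Lemma approx_coefs_residual N m : (m < N)%N -> residual (approx_coefs N) m = 0.
Proof.
elim: N m => [//|N IH] m hm /=.
by apply: residual_approx_step => //; exact: IH.
Qed.

Local Notation lam_max := (\max_(k : 'I_n) lam k)%N.

Lemma approx_coefs_succ k l N : (n * l + lam_max <= N)%N ->
  approx_coefs N.+1 k l = approx_coefs N k l.
Proof.
move=> h /=; rewrite /approx_step; case: pickP => // k0 /andP[hk hd].
have hnq : (n * ((N.+1 - lam k0) %/ n) = N.+1 - lam k0)%N by rewrite mulnC divnK.
have hmax : (lam k0 <= lam_max)%N := leq_bigmax k0.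
have hq : (l < (N.+1 - lam k0) %/ n)%N by rewrite -(ltn_pmul2l n_gt0) hnq; lia.
by rewrite /coef_add (ltn_eqF hq) andbF addr0.
Qed.

Lemma approx_coefs_stable k l d :
  approx_coefs (n * l + lam_max + d) k l = approx_coefs (n * l + lam_max) k l.
Proof.
elim: d => [|d IH]; first by rewrite addn0.
by rewrite addnS approx_coefs_succ ?leq_addr.
Qed.

Lemma decomposition_exists : exists (f : 'I_n -> ser) (eta : form1),
  in_IGamma n phi eta /\ w = form_add (form_comb f Om) eta.
Proof.
pose f k l := approx_coefs (n * l + lam_max) k l.
exists f, (form_sub w (form_comb f Om)); split.
  move=> N; rewrite pullback_sub; set M := (n * N + lam_max + N.+1)%N.
  have -> : pullback n phi (form_comb f Om) N = pullback n phi (form_comb (approx_coefs M) Om) N.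
    apply: pullback_comb_local => k l hl.
    have hnl : (n * l <= n * N)%N by rewrite leq_mul2l hl orbT.
    rewrite /f -(approx_coefs_stable k l (n * (N - l) + N.+1)) mulnBr.
    by congr approx_coefs; rewrite /M; lia.
  by apply: approx_coefs_residual; lia.
by rewrite form_add_subK.
Qed.

End Existence.

Section Uniqueness.

Context {n : nat} {phi : ser} {Om : 'I_n -> form1} {lam : 'I_n -> nat}.
Hypotheses (phi0 : phi 0%N = 0) (n_gt0 : (0 < n)%N).
Hypothesis Om_value : forall k, nu_eq n phi (Om k) (lam k).
Hypothesis lam_mod_inj : forall k k', lam k = lam k' %[mod n] -> k = k'.

Lemma value_index_inj k l k' l' :
  (lam k + n * l = lam k' + n * l')%N -> k = k' /\ l = l'.
Proof.
move=> e; have ek : k = k'.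
  apply: lam_mod_inj; rewrite -(modnMDl l) -(modnMDl l' (lam k')).
  by rewrite !(mulnC _ n) !(addnC (n * _)) e.
by split=> //; subst k'; apply/eqP; rewrite -(eqn_pmul2l n_gt0); apply/eqP; lia.
Qed.

(* Strong induction on the order lam_k + nl of the term x^l Om_k: at t^(v-1)
   only the terms of order v can contribute, and there is just one. *)
Lemma comb_pullback_eq0 (D : 'I_n -> ser) :
  (forall N, pullback n phi (form_comb D Om) N = 0) -> forall k l, D k l = 0.
Proof.
move=> hD k l; move: {2}(lam k + n * l)%N (erefl (lam k + n * l)%N) => v.
elim/ltn_ind: v k l => v IH k l hv.
have [lam_gt0 lead_neq0 _] := Om_value k.
have others k1 (l1 : nat) : (k1 != k) || (l1 != l) ->
    D k1 l1 * pullback n phi (xpow_form l1 (Om k1)) v.-1 = 0.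
  move=> hne; case: (ltngtP (lam k1 + n * l1) v) => [hlt | hgt | heq].
  - by rewrite (IH _ hlt k1 l1) ?mul0r.
  - by rewrite (pullback_xpow_low phi0 n_gt0 _ _ _ _ (Om_value k1)) ?mulr0 //; lia.
  - have [ek el] : k1 = k /\ l1 = l by apply: value_index_inj; rewrite heq hv.
    by move: hne; rewrite ek el !eqxx.
have hl : (l < v.-1.+1)%N by have := leq_pmull l n_gt0; lia.
have := hD v.-1; rewrite pullback_comb (bigD1 k) //= (bigD1 (Ordinal hl)) //=.
rewrite [X in _ + X + _]big1 => [|l1 hl1]; last first.
  by apply: others; rewrite orbC -(inj_eq val_inj) hl1.
rewrite [X in _ + X]big1 => [|k1 hk1]; last by apply: big1 => l1 _; apply: others; rewrite hk1.
rewrite !addr0 -hv (pullback_xpow_lead phi0 n_gt0 _ _ _ (Om_value k)).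
by move/eqP; rewrite mulf_eq0 (negbTE lead_neq0) orbF => /eqP.
Qed.

Lemma form_comb_pullback_inj (f g : 'I_n -> ser) :
  (forall N, pullback n phi (form_comb f Om) N = pullback n phi (form_comb g Om) N) ->
  f = g.
Proof.
move=> hfg; apply: functional_extensionality => k; apply: functional_extensionality => l.
apply/eqP; rewrite -subr_eq0; apply/eqP; move: k l; apply: comb_pullback_eq0 => N.
by rewrite -pullback_combB hfg subrr.
Qed.

End Uniqueness.

Theorem mainTheorem4 (n : nat) (phi : ser) (beta1 : nat)
  (Om : 'I_n -> form1) (lam : 'I_n -> nat) :
  puiseux_param n phi beta1 ->
  injective lam ->
  (forall k, nu_eq n phi (Om k) (lam k)) ->
  cx_basis n (fun m => exists k, lam k = m) (Lambda n phi) ->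
  (forall w : form1, exists (f : 'I_n -> ser) (eta : form1),
      in_IGamma n phi eta /\ w = form_add (form_comb f Om) eta) /\
  (forall (f g : 'I_n -> ser) (eta eta' : form1),
      in_IGamma n phi eta -> in_IGamma n phi eta' ->
      form_add (form_comb f Om) eta = form_add (form_comb g Om) eta' ->
      f = g /\ eta = eta').
Proof.
move=> [[n_ge2 _ phi_low _] [_ beta1_gt_n _]] lam_inj Om_value basis.
have phi0 : phi 0%N = 0 by apply: phi_low; lia.
have n_gt0 : (0 < n)%N by lia.
split=> [w | f g eta eta' eta0 eta'0 e].
  apply: decomposition_exists => // m /(basis.1 m) [b [q [[k <-] ->]]].
  by exists k, q.
have lam_mod_inj k k' : lam k = lam k' %[mod n] -> k = k'.
  by move/(cx_basis_mod_eq basis)/lam_inj.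
have fg : f = g.
  apply: (form_comb_pullback_inj phi0 n_gt0 Om_value lam_mod_inj) => N.
  have := congr1 (fun w => pullback n phi w N) e.
  by rewrite !pullback_add eta0 eta'0 !addr0.
by subst g; split=> //; exact: form_addI e.
Qed.
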